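(* Let $\rho\ge 0$ and let $t=(\sqrt{1+8\rho}-1)/(2\rho)$ if $\rho>0$ and $t=2$ if $\rho=0$. Consider the two-dimensional Poisson regression model with interaction at $\boldsymbol{\beta}=(0,-1,-1,-\rho)^\top$ on $\mathcal{X}=[0,\infty)^2$, and let $\xi_t$ be the design assigning equal weights $1/4$ to $(0,0)$, $(2,0)$, $(0,2)$ and $(t,t)$. Then $d((x,0);\xi_t)=d((0,x);\xi_t)\le 0$ for all $x\ge 0$.
   Context: In the model, an observation at setting $\mathbf{x}=(x_1,x_2)$ is Poisson distributed with mean $\lambda(\mathbf{x})=\exp(\mathbf{f}(\mathbf{x})^\top\boldsymbol{\beta})=\exp(-x_1-x_2-\rho x_1x_2)$, where $\mathbf{f}(\mathbf{x})=(1,x_1,x_2,x_1x_2)^\top$. For a design $\xi$ with settings $\mathbf{x}_i$ and weights $w_i$ (nonnegative, summing to $1$), the information matrix is $\mathbf{M}(\xi)=\sum_i w_i\lambda(\mathbf{x}_i)\mathbf{f}(\mathbf{x}_i)\mathbf{f}(\mathbf{x}_i)^\top$, and the deduced sensitivity function is $d(\mathbf{x};\xi)=\mathbf{f}(\mathbf{x})^\top\mathbf{M}(\xi)^{-1}\mathbf{f}(\mathbf{x})/p-1/\lambda(\mathbf{x})$ with $p=4$. *)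

From HB Require Import structures.
From mathcomp Require Import all_boot all_order all_algebra.
From mathcomp Require Import reals sequences exp.
Set Implicit Arguments. Unset Strict Implicit. Unset Printing Implicit Defensive.
Import Order.TTheory GRing.Theory Num.Theory.
Local Open Scope ring_scope.

Section PoissonDesign.
Variable R : realType.

Definition fvec (x : R * R) : 'cV[R]_4 :=
  \col_(i < 4) nth 0 [:: 1; x.1; x.2; x.1 * x.2] i.

Definition beta (rho : R) : 'cV[R]_4 :=
  \col_(i < 4) nth 0 [:: 0; -1; -1; - rho] i.

Definition lam (rho : R) (x : R * R) : R :=
  expR (((fvec x)^T *m beta rho) 0 0).

Definition design := seq ((R * R) * R).

Definition is_design (xi : design) : Prop :=
  (forall p, p \in xi -> 0 <= p.2) /\ \sum_(p <- xi) p.2 = 1.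

Definition infoM (rho : R) (xi : design) : 'M[R]_4 :=
  \sum_(p <- xi) (p.2 * lam rho p.1) *: (fvec p.1 *m (fvec p.1)^T).

(* deduced sensitivity function, p = 4 *)
Definition sens (rho : R) (xi : design) (x : R * R) : R :=
  ((fvec x)^T *m invmx (infoM rho xi) *m fvec x) 0 0 / 4%:R - (lam rho x)^-1.

Definition t_of (rho : R) : R :=
  if 0 < rho then (Num.sqrt (1 + 8%:R * rho) - 1) / (2%:R * rho) else 2%:R.

Definition xi_t (t : R) : design :=
  [:: ((0, 0), 4%:R^-1); ((2%:R, 0), 4%:R^-1); ((0, 2%:R), 4%:R^-1);
      ((t, t), 4%:R^-1)].

End PoissonDesign.

From HB Require Import structures.
From mathcomp Require Import all_boot all_order all_algebra.
From mathcomp Require Import reals sequences exp.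
From mathcomp Require Import ring lra.
Import Order.TTheory GRing.Theory Num.Theory.
Local Open Scope ring_scope.

(* The design xi_t is saturated: its support points give a basis f(x_1), ..., f(x_4)
   of R^4, so M(xi) = F D F^T with F = [f(x_1) ... f(x_4)] and D = diag(w_j lambda(x_j)).
   Hence if f(x) = F c then f(x)^T M^-1 f(x) = sum_j c_j^2 / (w_j lambda(x_j)).
   On the axes f(x,0) = (1 - x/2) f(0,0) + (x/2) f(2,0), and symmetrically for (0,x),
   so neither t nor rho enters and both sensitivities equal
   (1 - x/2)^2 + (x/2)^2 e^2 - e^x.  This is <= 0 for x >= 0, with equality at 0 and a
   tangency at 2; it follows from e^u >= (1 + u/n)^n, expanded around 0 and around 2,
   together with 5 <= e^2 <= 10. *)

Section CongruenceToDiagonal.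
Variable F : fieldType.

Lemma sum_scale_outer_mx m n (g : 'I_n -> 'cV[F]_m) (a : 'I_n -> F) :
  let G := \matrix_(i, j) g j i 0 in
  \sum_j a j *: (g j *m (g j)^T) = G *m diag_mx (\row_j a j) *m G^T.
Proof.
move=> G; apply/matrixP => i k.
rewrite mul_mx_diag summxE !mxE; apply: eq_bigr => j _.
rewrite !mxE big_ord1 !mxE; ring.
Qed.

Variables (n : nat) (X : 'M[F]_n) (d : 'rV[F]_n).
Hypotheses (X_unit : X \in unitmx) (d_neq0 : forall j, d 0 j != 0).

Lemma congr_diag_unitmx : X *m diag_mx d *m X^T \in unitmx.
Proof.
rewrite !unitmx_mul unitmx_tr X_unit andbT /= unitmxE det_diag unitfE.
by apply/prodf_neq0 => j _.
Qed.

Lemma congr_diag_quad_form (c : 'cV[F]_n) :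
  ((X *m c)^T *m invmx (X *m diag_mx d *m X^T) *m (X *m c)) 0 0
    = \sum_j c j 0 ^+ 2 / d 0 j.
Proof.
pose w : 'cV_n := \col_j (c j 0 / d 0 j).
have Dw : diag_mx d *m w = c.
  by apply/colP => j; rewrite mul_diag_mx !mxE mulrC divfK.
have Mv : X *m diag_mx d *m X^T *m (invmx X^T *m w) = X *m c.
  by rewrite -!mulmxA mulKVmx ?unitmx_tr // Dw.
rewrite -{2}Mv -mulmxA mulKmx ?congr_diag_unitmx // trmx_mul -mulmxA.
rewrite (mulmxA X^T) mulmxV ?unitmx_tr // mul1mx mxE.
by apply: eq_bigr => j _; rewrite !mxE expr2 mulrA.
Qed.

End CongruenceToDiagonal.

Section SaturatedDesign.
Variable R : realType.
Implicit Types (rho t x : R) (xi : design R).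

(* Columns are f at the first four support points: the transpose of the usual model matrix. *)
Definition supp_mx xi : 'M[R]_4 := \matrix_(i, j) fvec (nth (0, 0, 0) xi j).1 i 0.

Definition info_weights rho xi : 'rV[R]_4 :=
  \row_j ((nth (0, 0, 0) xi j).2 * lam rho (nth (0, 0, 0) xi j).1).

Lemma infoM_saturated rho xi : size xi = 4 ->
  infoM rho xi = supp_mx xi *m diag_mx (info_weights rho xi) *m (supp_mx xi)^T.
Proof.
move=> sz; rewrite /infoM (big_nth (0, 0, 0)) sz big_mkord.
by rewrite sum_scale_outer_mx; congr (_ *m _ *m _^T); apply/rowP => j; rewrite mxE.
Qed.

Lemma sens_saturated rho xi (z : R * R) (c : 'cV[R]_4) :
  size xi = 4 -> (forall p, p \in xi -> 0 < p.2) ->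
  supp_mx xi \in unitmx -> supp_mx xi *m c = fvec z ->
  sens rho xi z = (\sum_j c j 0 ^+ 2 / info_weights rho xi 0 j) / 4%:R - (lam rho z)^-1.
Proof.
move=> sz w_gt0 X_unit Xc; rewrite /sens infoM_saturated // -Xc congr_diag_quad_form //.
move=> j; rewrite mxE mulf_neq0 ?gt_eqF ?expR_gt0 //.
by apply/w_gt0/mem_nth; rewrite sz.
Qed.

Lemma lam_x_axis rho x : lam rho (x, 0) = expR (- x).
Proof. by rewrite /lam !mxE !big_ord_recl big_ord0 !mxE /=; congr (expR _); ring. Qed.

Lemma lam_y_axis rho x : lam rho (0, x) = expR (- x).
Proof. by rewrite /lam !mxE !big_ord_recl big_ord0 !mxE /=; congr (expR _); ring. Qed.

Lemma supp_mx_xi_t_unit t : t != 0 -> supp_mx (xi_t t) \in unitmx.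
Proof.
move=> t_neq0; rewrite -unitmx_tr unitmxE det_trig; last first.
  apply/is_trig_mxP => -[[|[|[|[|?]]]] ?] -[[|[|[|[|?]]]] ?] //= _;
  by rewrite !mxE /= ?(mul0r, mulr0).
by rewrite unitfE !big_ord_recl big_ord0 !mxE /= !mulf_neq0 ?oner_neq0 ?pnatr_eq0.
Qed.

Lemma t_of_gt0 rho : 0 < t_of rho.
Proof.
rewrite /t_of; case: ifP => [rho_gt0 | _]; last by rewrite ltr0n.
rewrite divr_gt0 ?mulr_gt0 ?ltr0n // subr_gt0 -{1}sqrtr1 ltr_sqrt; lra.
Qed.

Lemma xi_t_weights_gt0 t : forall p, p \in xi_t t -> 0 < p.2.
Proof. by move=> p; rewrite !inE => /or4P[] /eqP ->; rewrite invr_gt0 ltr0n. Qed.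

Lemma sens_xi_t_x_axis rho t x : t != 0 ->
  sens rho (xi_t t) (x, 0) = (1 - x / 2) ^+ 2 + (x / 2) ^+ 2 * expR 2 - expR x.
Proof.
move=> t_neq0.
rewrite (@sens_saturated rho _ _ (\col_(i < 4) nth 0 [:: 1 - x / 2; x / 2; 0; 0] i)) //.
- rewrite !big_ord_recl big_ord0 !mxE /= !lam_x_axis lam_y_axis oppr0 expR0 !expRN.
  by field; rewrite !gt_eqF ?expR_gt0.
- exact: xi_t_weights_gt0.
- exact: supp_mx_xi_t_unit.
- apply/colP => i; rewrite !mxE !big_ord_recl big_ord0 !mxE /=.
  by case: i => [[|[|[|[|?]]]] ?] /=; rewrite ?nth_nil; field.
Qed.

Lemma sens_xi_t_y_axis rho t x : t != 0 ->
  sens rho (xi_t t) (0, x) = (1 - x / 2) ^+ 2 + (x / 2) ^+ 2 * expR 2 - expR x.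
Proof.
move=> t_neq0.
rewrite (@sens_saturated rho _ _ (\col_(i < 4) nth 0 [:: 1 - x / 2; 0; x / 2; 0] i)) //.
- rewrite !big_ord_recl big_ord0 !mxE /= !lam_y_axis lam_x_axis oppr0 expR0 !expRN.
  by field; rewrite !gt_eqF ?expR_gt0.
- exact: xi_t_weights_gt0.
- exact: supp_mx_xi_t_unit.
- apply/colP => i; rewrite !mxE !big_ord_recl big_ord0 !mxE /=.
  by case: i => [[|[|[|[|?]]]] ?] /=; rewrite ?nth_nil; field.
Qed.
End SaturatedDesign.

Section ExpBounds.
Variable R : realType.

Lemma expR_ge_pow n (u : R) : (0 < n)%N -> - n%:R <= u -> (1 + u / n%:R) ^+ n <= expR u.
Proof.
move=> n_gt0 u_ge; have N_gt0 : 0 < n%:R :> R by rewrite ltr0n.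
have -> : expR u = expR (u / n%:R) ^+ n by rewrite -expRM_natr divfK ?gt_eqF.
have ge_N1 : -1 <= u / n%:R by rewrite ler_pdivlMr // mulN1r.
apply: lerXn2r; rewrite ?nnegrE ?expR_ge0 ?expR_ge1Dx //; lra.
Qed.

Lemma expR2_bounds : 5 <= expR (2 : R) <= 10.
Proof.
have lo : (1 + 2 / 4) ^+ 4 <= expR 2 :> R by apply: (expR_ge_pow 4) => //; lra.
have hi : (1 + -2 / 8) ^+ 8 <= expR (-2) :> R by apply: (expR_ge_pow 8) => //; lra.
have inv : expR 2 * expR (-2) = 1 :> R by rewrite -expRD subrr expR0.
have q_gt0 := expR_gt0 (2 : R).
rewrite [_ ^+ 4](_ : _ = 81 / 16) in lo; last by field.
rewrite [_ ^+ 8](_ : _ = (81 / 256) ^+ 2) in hi; last by field.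
apply/andP; split; nra.
Qed.

Lemma expR_ge_axis_interpolant (x : R) : 0 <= x ->
  (1 - x / 2) ^+ 2 + (x / 2) ^+ 2 * expR 2 <= expR x.
Proof.
move=> x_ge0; have /andP[q_ge5 q_le10] := expR2_bounds.
set q := expR 2 in q_ge5 q_le10 *; rewrite !expr2.
have [x_ge2 | x_lt2] := lerP 2 x.
  set y := x - 2; have y_ge0 : 0 <= y by rewrite /y; lra.
  have ey : (1 + y / 3) ^+ 3 <= expR y by apply: expR_ge_pow => //; lra.
  have -> : expR x = q * expR y by rewrite -expRD addrC subrK.
  apply: le_trans (ler_wpM2l _ ey); last lra.
  rewrite !exprS expr0 (_ : x = y + 2); last by rewrite /y; ring.
  have : 0 <= y * y * (q - 3) by rewrite mulr_ge0 ?mulr_ge0 //; lra.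
  have : 0 <= q * (y * y * y) by rewrite !mulr_ge0 //; lra.
  nra.
have [x_small | x_large] := lerP x (4 / 5).
  have ex : (1 + x / 3) ^+ 3 <= expR x by apply: expR_ge_pow => //; lra.
  apply: le_trans ex; rewrite !exprS expr0.
  have : 0 <= x * x * (10 - q) by rewrite !mulr_ge0 //; lra.
  have : 0 <= x * (4 / 5 - x) by rewrite mulr_ge0 //; lra.
  have : 0 <= x * x * x by rewrite !mulr_ge0.
  nra.
set z := 2 - x; have z_ge0 : 0 <= z by rewrite /z; lra.
have ez : (1 + - z / 4) ^+ 4 <= expR (- z) by apply: expR_ge_pow => //; rewrite /z; lra.
have -> : expR x = q * expR (- z) by rewrite -expRD /z opprB addrC subrK.
apply: le_trans (ler_wpM2l _ ez); last lra.
rewrite !exprS expr0 (_ : x = 2 - z); last by rewrite /z; ring.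
have : 0 <= z * z * (q - 5) by rewrite !mulr_ge0 //; lra.
have : 0 <= z * z * (q * (6 / 5 - z)) by rewrite !mulr_ge0 //; rewrite /z; lra.
have : 0 <= q * (z * z * z * z) by rewrite !mulr_ge0 //; lra.
nra.
Qed.

End ExpBounds.

Theorem lemma3 (R : realType) (rho : R) (hrho : 0 <= rho) :
  forall x : R, 0 <= x ->
    sens rho (xi_t (t_of rho)) (x, 0) = sens rho (xi_t (t_of rho)) (0, x) /\
    sens rho (xi_t (t_of rho)) (x, 0) <= 0.
Proof.
move=> x x_ge0; have t_neq0 : t_of rho != 0 by rewrite lt0r_neq0 ?t_of_gt0.
rewrite sens_xi_t_x_axis // sens_xi_t_y_axis //; split => //.
by rewrite subr_le0 expR_ge_axis_interpolant.
Qed.
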